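(* Let $f:\mathbb{R}^n\to\mathbb{R}$ be a convex, continuously differentiable function whose gradient is locally $\nu$-Hölder for some $\nu\in(0,1]$, and assume $\mathcal{X}^*:=\arg\min_{x\in\mathbb{R}^n} f(x)\neq\emptyset$ with optimal value $f^*$. Let $x^0\in\mathbb{R}^n$ be such that the level set $\Lambda(x^0):=\{x\in\mathbb{R}^n: f(x)\le f(x^0)\}$ is bounded. Let $r:=\max\{\|x\|: x\in\Lambda(x^0)\}$, $\bar r:=(1+2(1+\nu)^{1/\nu})r$, $\Omega:=\overline{B}(0;\bar r)$, and let $L_\Omega>0$ be a constant with $\|\nabla f(x)-\nabla f(y)\|\le L_\Omega\|x-y\|^\nu$ for all $x,y\in\Omega$. Let $(x^k)_{k\ge0}$ be generated by $$x^{k+1}=x^k-\alpha_k\|\nabla f(x^k)\|^{\frac{1-\nu}{\nu}}\nabla f(x^k),\qquad \alpha_k\in\Big(0,\big(\tfrac{1+\nu}{L_\Omega}\big)^{1/\nu}\Big].$$ Then: (a) $x^k\in\Lambda(x^0)$ for all $k$, and for all $k\in\mathbb{N}_0$, $$f(x^{k+1})\le f(x^k)-\Big(\alpha_k-\tfrac{L_\Omega}{1+\nu}\alpha_k^{1+\nu}\Big)\|\nabla f(x^k)\|^{\frac{1+\nu}{\nu}},$$ and $f(x^{k+1})\le f(x^k)$ for all $k\in\mathbb{N}_0$; (b) if moreover $\alpha_k\in\big(0,\tfrac{4\nu}{(1+\nu)L_\Omega^{1/\nu}}\big]$ for all $k$, then for every $x^*\in\mathcal{X}^*$ and all $k\in\mathbb{N}_0$,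 $$\|x^{k+1}-x^*\|^2\le\|x^k-x^*\|^2-\Big(\tfrac{4\nu\alpha_k}{(1+\nu)L_\Omega^{1/\nu}}-\alpha_k^2\Big)\|\nabla f(x^k)\|^{\frac{2}{\nu}},$$ and $\|x^{k+1}-x^*\|\le\|x^k-x^*\|$ for all $k\in\mathbb{N}_0$; (c) the coefficient $\alpha\mapsto \alpha-\tfrac{L_\Omega}{1+\nu}\alpha^{1+\nu}$ in (a) is maximized over $\big(0,(\tfrac{1+\nu}{L_\Omega})^{1/\nu}\big]$ at $\alpha=1/L_\Omega^{1/\nu}$, and the coefficient $\alpha\mapsto\tfrac{4\nu\alpha}{(1+\nu)L_\Omega^{1/\nu}}-\alpha^2$ in (b) is maximized over $\big(0,\tfrac{4\nu}{(1+\nu)L_\Omega^{1/\nu}}\big]$ at $\alpha=\tfrac{2\nu}{(1+\nu)L_\Omega^{1/\nu}}$.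
   Context: A map $F$ is locally $\nu$-Hölder if every point has a neighbourhood $B(\bar x;\delta)$ and a constant $L>0$ with $\|F(x)-F(y)\|\le L\|x-y\|^\nu$ on it. $\overline{B}(0;\rho)$ denotes the closed Euclidean ball of radius $\rho$ centred at $0$; $\mathbb{N}_0=\{0,1,2,\dots\}$. Since $\nabla f$ is locally $\nu$-Hölder and $\Omega$ is compact, such a constant $L_\Omega$ exists. *)

From HB Require Import structures.
From mathcomp Require Import all_boot all_order all_algebra.
From mathcomp Require Import all_classical all_reals all_analysis.
Set Implicit Arguments. Unset Strict Implicit. Unset Printing Implicit Defensive.
Import Order.TTheory GRing.Theory Num.Theory.
Import numFieldNormedType.Exports.
Local Open Scope ring_scope.

(* Euclidean inner product and Euclidean norm on R^n = 'rV[R]_n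
   (the library's norm on 'rV is the max-norm, so we define the Euclidean one). *)
Definition dotv {R : realType} {n : nat} (u v : 'rV[R]_n) : R :=
  \sum_(i < n) u ord0 i * v ord0 i.

Definition enorm {R : realType} {n : nat} (u : 'rV[R]_n) : R :=
  Num.sqrt (dotv u u).

Definition convex_fun {R : realType} {n : nat} (f : 'rV[R]_n -> R) : Prop :=
  forall (x y : 'rV[R]_n) (t : R), 0 <= t -> t <= 1 ->
    f ((1 - t) *: x + t *: y) <= (1 - t) * f x + t * f y.

Definition is_gradient {R : realType} {n : nat}
  (f : 'rV[R]_n -> R) (gf : 'rV[R]_n -> 'rV[R]_n) : Prop :=
  forall x : 'rV[R]_n, differentiable f x /\
    forall v : 'rV[R]_n, 'd f x v = dotv (gf x) v.

Definition locally_holder {R : realType} {n : nat}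
  (F : 'rV[R]_n -> 'rV[R]_n) (nu : R) : Prop :=
  forall xb : 'rV[R]_n, exists delta : R, exists L : R, 0 < delta /\ 0 < L /\
    forall x y : 'rV[R]_n, enorm (x - xb) < delta -> enorm (y - xb) < delta ->
      enorm (F x - F y) <= L * powR (enorm (x - y)) nu.

From HB Require Import structures.
From mathcomp Require Import all_boot all_order all_algebra.
From mathcomp Require Import all_classical all_reals all_analysis.
From mathcomp Require Import ring lra.
Import Order.TTheory GRing.Theory Num.Theory.
Import numFieldNormedType.Exports.
Local Open Scope ring_scope.

(* Integrating the Hoelder bound on the gradient along a segment gives the
   descent inequality f y <= f x + <grad f x, y - x> + L/(1+nu) |y - x|^(1+nu)
   for x, y in Omega.  A minimiser lies in Lambda(x0) and has zero gradient,
   so |grad f| <= L (2r)^nu on Lambda(x0) and every admissible step has length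
   at most 2 (1+nu)^(1/nu) r: this is why Omega has radius rbar, and the
   descent inequality then gives (a) and, by induction, keeps the iterates in
   Lambda(x0).  For (b), the descent inequality at x* along + s grad f y,
   convexity at y and (a) for the step 1/L^(1/nu) combine into
   <grad f y, y - x*> >= 2 nu / ((1+nu) L^(1/nu)) |grad f y|^((1+nu)/nu),
   and expanding |y - s grad f y - x*|^2 gives (b).  Part (c) is Young's
   inequality for the first coefficient and completing the square for the
   second. *)

Section Euclidean.
Context {R : realType} {n : nat}.
Implicit Types u v w : 'rV[R]_n.

Lemma dotvC u v : dotv u v = dotv v u.
Proof. by apply: eq_bigr => i _; rewrite mulrC. Qed.

Lemma dotvDr u v w : dotv u (v + w) = dotv u v + dotv u w.
Proof. by rewrite /dotv -big_split; apply: eq_bigr => i _; rewrite mxE mulrDr. Qed.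

Lemma dotvZr (a : R) u v : dotv u (a *: v) = a * dotv u v.
Proof. by rewrite /dotv mulr_sumr; apply: eq_bigr => i _; rewrite mxE mulrCA. Qed.

Lemma dotvNr u v : dotv u (- v) = - dotv u v.
Proof. by rewrite -scaleN1r dotvZr mulN1r. Qed.

Lemma dotvBr u v w : dotv u (v - w) = dotv u v - dotv u w.
Proof. by rewrite dotvDr dotvNr. Qed.

Lemma dotvDl u v w : dotv (v + w) u = dotv v u + dotv w u.
Proof. by rewrite dotvC dotvDr !(dotvC u). Qed.

Lemma dotvZl (a : R) u v : dotv (a *: v) u = a * dotv v u.
Proof. by rewrite dotvC dotvZr dotvC. Qed.

Lemma dotvBl u v w : dotv (v - w) u = dotv v u - dotv w u.
Proof. by rewrite dotvC dotvBr !(dotvC u). Qed.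

Lemma dotv0r u : dotv u 0 = 0.
Proof. by rewrite -(scale0r 0) dotvZr mul0r. Qed.

Lemma dotv_ge0 u : 0 <= dotv u u.
Proof. by apply: sumr_ge0 => i _; rewrite -expr2 sqr_ge0. Qed.

Lemma dotv_eq0 u : dotv u u = 0 -> u = 0.
Proof.
move=> u0; apply/rowP => i; rewrite mxE.
have sq_ge0 (j : 'I_n) : true -> 0 <= u ord0 j * u ord0 j by rewrite -expr2 sqr_ge0.
by move/eqP: (psumr_eq0P sq_ge0 u0 (i:=i) isT); rewrite mulf_eq0 orbb => /eqP.
Qed.

Lemma enorm_ge0 u : 0 <= enorm u.
Proof. exact: sqrtr_ge0. Qed.

Lemma enorm_sqr u : enorm u ^+ 2 = dotv u u.
Proof. by rewrite sqr_sqrtr // dotv_ge0. Qed.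

Lemma dotv_le_enorm u v : dotv u v <= enorm u * enorm v.
Proof.
set C := dotv u v; set A := dotv u u; set B := dotv v v.
have quad_ge0 t : 0 <= A - 2 * t * C + t ^+ 2 * B.
  have := dotv_ge0 (u - t *: v).
  rewrite dotvBl !dotvBr !dotvZl !dotvZr (dotvC v u) -/A -/B -/C.
  by congr (_ <= _); ring.
have [C_le0|C_gt0] := lerP C 0.
  by apply: le_trans C_le0 _; rewrite mulr_ge0 // enorm_ge0.
have B_gt0 : 0 < B.
  rewrite lt_def dotv_ge0 andbT; apply/eqP => B0.
  have := quad_ge0 ((A + 1) / (2 * C)); rewrite B0 mulr0 addr0.
  have -> : 2 * ((A + 1) / (2 * C)) * C = A + 1 by field; rewrite gt_eqF.
  by rewrite opprD addrA subrr sub0r oppr_ge0 ler10.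
rewrite -ler_sqr ?nnegrE ?mulr_ge0 ?enorm_ge0 ?(ltW C_gt0) // exprMn !enorm_sqr -/A -/B.
have := quad_ge0 (C / B).
have -> : A - 2 * (C / B) * C + (C / B) ^+ 2 * B = A - C ^+ 2 / B.
  by field; rewrite gt_eqF.
by rewrite subr_ge0 ler_pdivrMr.
Qed.

Lemma enormZ (a : R) u : enorm (a *: u) = `|a| * enorm u.
Proof.
by rewrite /enorm dotvZl dotvZr mulrA -expr2 sqrtrM ?sqr_ge0 // sqrtr_sqr.
Qed.

Lemma enormN u : enorm (- u) = enorm u.
Proof. by rewrite -scaleN1r enormZ normrN normr1 mul1r. Qed.

Lemma ler_enormD u v : enorm (u + v) <= enorm u + enorm v.
Proof.
rewrite -ler_sqr ?nnegrE ?addr_ge0 ?enorm_ge0 //.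
rewrite enorm_sqr dotvDl !dotvDr sqrrD !enorm_sqr (dotvC v u).
have := dotv_le_enorm u v; rewrite mulr2n; lra.
Qed.

Lemma ler_enormB u v : enorm (u - v) <= enorm u + enorm v.
Proof. by rewrite -(enormN v) ler_enormD. Qed.

Lemma enormB_sqr u v :
  enorm (u - v) ^+ 2 = enorm u ^+ 2 - 2 * dotv v u + enorm v ^+ 2.
Proof. by rewrite !enorm_sqr dotvBl !dotvBr (dotvC u v); ring. Qed.

End Euclidean.

Lemma derive_le0_at_right_max {R : realType} (p : R -> R) :
  derivable p 0 1 -> (forall h, 0 < h < 1 -> p h <= p 0) -> 'D_1 p 0 <= 0.
Proof.
move=> dp pmax.
rewrite ['D_1 p 0]cvg_at_rightE; last exact: dp.
apply: limr_le.
  rewrite -(cvg_at_rightE (fun h : R => h^-1 *: ((p \o shift 0) _ - p 0))) //.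
  apply: cvg_trans dp; apply: cvg_app.
  move=> A [e e_gt0 Ae]; exists e => // x xe x_gt0; apply: Ae => //.
  exact/lt0r_neq0.
near=> h; apply: mulr_ge0_le0.
  by rewrite invr_ge0; apply: ltW; near: h; exists 1 => /=.
rewrite subr_le0 [_%:A]mulr1 /= addr0; apply: pmax; near: h.
exists 1 => //= h; rewrite /ball_ /= sub0r normrN => h1 h0.
by rewrite h0 /=; move: h1; rewrite gtr0_norm.
Unshelve. all: by end_near. Qed.

(* The bound [p 1 - p 0 - dp 0 = int_0^1 (dp t - dp 0) dt <= K / (1 + nu)],
   obtained without integrals from the mean value theorem applied to
   [p t - dp 0 * t - K / (1 + nu) * t ^ (1 + nu)]. *)
Lemma taylor1_holder_le {R : realType} (p dp : R -> R) (K nu : R) : 0 < nu ->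
  (forall t : R, is_derive t (1 : R) p (dp t)) ->
  (forall t, 0 < t < 1 -> dp t - dp 0 <= K * powR t nu) ->
  p 1 <= p 0 + dp 0 + K / (1 + nu).
Proof.
move=> nu_gt0 Dp dp_le.
have nu1_gt0 : 0 < 1 + nu by rewrite ltr_pwDr.
pose h := p - dp 0 \*: id - K / (1 + nu) \*: (fun t : R => powR t (1 + nu)).
pose dh t := dp t - dp 0 *: 1 - K / (1 + nu) *: ((1 + nu) * powR t (1 + nu - 1)).
have Dh (t : R) : 0 < t -> is_derive t (1 : R) h (dh t).
  move=> t_gt0; have Did := is_deriveZ (dp 0) (@is_derive_id R R^o t 1).
  exact: is_deriveB (is_deriveB (Dp t) Did) (is_deriveZ _ (is_derive1_powR _ t_gt0)).
have ph (t : R) : {for t, continuous p}.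
  exact/differentiable_continuous/derivable1_diffP.
have h_cont : {within `[0, 1], continuous h}%classic.
  apply/continuous_within_itvP; first exact: ltr01.
  split.
  - move=> t; rewrite in_itv /= => /andP[t_gt0 _].
    apply/differentiable_continuous/derivable1_diffP.
    exact: (@ex_derive _ _ _ _ _ _ _ (Dh t t_gt0)).
  - have -> : h 0 = p 0 - dp 0 *: 0 - K / (1 + nu) *: powR 0 (1 + nu) by [].
    apply: cvgB; first apply: cvgB.
    + exact: cvg_at_right_filter (ph 0).
    + by apply: cvgZl_tmp; exact: cvg_at_right_filter cvg_id.
    + by apply: cvgZl_tmp; rewrite powR0 ?gt_eqF //; exact: powR_cvg0.
  - apply/cvg_at_left_filter/differentiable_continuous/derivable1_diffP.
    exact: (@ex_derive _ _ _ _ _ _ _ (Dh 1 ltr01)).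
have Dh01 (t : R) : t \in `]0, 1[ -> is_derive t (1 : R) h (dh t).
  by rewrite in_itv /= => /andP[t_gt0 _]; exact: Dh.
have [c] := MVT ltr01 Dh01 h_cont.
rewrite in_itv /= => /andP[c_gt0 c_lt1].
have dhE : dh c = dp c - dp 0 - K * powR c nu.
  rewrite /dh (_ : 1 + nu - 1 = nu); last by ring.
  by rewrite [_%:A]mulr1 -[_ *: (_ * _)]/(_ * (_ * _)); field; rewrite gt_eqF.
have := dp_le c; rewrite c_gt0 c_lt1 => /(_ isT) dp_c.
have -> : h 1 - h 0 = p 1 - dp 0 * 1 - K / (1 + nu) * powR 1 (1 + nu)
                      - (p 0 - dp 0 * 0 - K / (1 + nu) * powR 0 (1 + nu)) by [].
rewrite dhE powR1 powR0 ?gt_eqF // subr0; lra.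
Qed.

Section Gradient.
Context {R : realType} {n : nat} {f : 'rV[R]_n -> R} {gf : 'rV[R]_n -> 'rV[R]_n}.
Hypothesis f_grad : is_gradient f gf.

Lemma is_derive_line (x d : 'rV[R]_n) (t : R) :
  is_derive t (1 : R) (fun s : R => f (x + s *: d)) (dotv (gf (x + t *: d)) d).
Proof.
have [df dfE] := f_grad (x + t *: d).
have quotE : (fun h : R => h^-1 *: (((fun s => f (x + s *: d)) \o shift t) (h *: 1)
                - f (x + t *: d)))
    = (fun h : R => h^-1 *: ((f \o shift (x + t *: d)) (h *: d) - f (x + t *: d))).
  apply/funext => h /=; congr (_ *: (f _ - _)).
  by rewrite scaler1 scalerDl addrCA addrA.
have Dline : derivable (fun s : R => f (x + s *: d)) t 1.
  by rewrite /derivable quotE; exact: diff_derivable.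
apply: DeriveDef => //.
by rewrite /derive quotE -/(derive f (x + t *: d) d) deriveE.
Qed.

Lemma convex_gradient_ineq : convex_fun f ->
  forall x y, f x + dotv (gf x) (y - x) <= f y.
Proof.
move=> f_cvx x y; set d := y - x; set K := f y - f x.
have D0 := is_deriveB (is_derive_line x d 0) (is_deriveZ K (@is_derive_id R R^o 0 1)).
have := @derive_le0_at_right_max _ _ (@ex_derive _ _ _ _ _ _ _ D0).
rewrite (@derive_val _ _ _ _ _ _ _ D0) scale0r addr0.
match goal with |- (?P -> _) -> _ => suff below_chord : P end.
  by move=> /(_ below_chord); rewrite /K [_%:A]mulr1; lra.
move=> h /andP[h_gt0 h_lt1]; rewrite /= !fctE /= scale0r addr0 scaler0 subr0.
rewrite -[K *: h]/(K * h).
have := f_cvx x y h (ltW h_gt0) (ltW h_lt1).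
have -> : (1 - h) *: x + h *: y = x + h *: d.
  by apply/rowP => i; rewrite !mxE; ring.
rewrite /K; lra.
Qed.

Lemma gradient_eq0_at_min xs : (forall y, f xs <= f y) -> gf xs = 0.
Proof.
move=> xs_min; set g := gf xs.
have D := is_derive_line xs g 0.
have D0 : is_derive (0 : R) (1 : R) (fun s : R => f (xs + s *: g)) 0.
  apply: (@derive1_at_min R _ (-1) 1) => //.
  - by move=> t _; exact: (@ex_derive _ _ _ _ _ _ _ (is_derive_line xs g t)).
  - by rewrite in_itv /= oppr_lt0 ltr01.
  - by move=> t _; rewrite scale0r addr0.
have := @derive_val _ _ _ _ _ _ _ D.
rewrite (@derive_val _ _ _ _ _ _ _ D0) scale0r addr0 => /esym.
exact: dotv_eq0.
Qed.

Lemma holder_descent {nu L rho : R} : 0 < nu ->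
  (forall y z, enorm y <= rho -> enorm z <= rho ->
     enorm (gf y - gf z) <= L * powR (enorm (y - z)) nu) ->
  forall x y, enorm x <= rho -> enorm y <= rho ->
  f y <= f x + dotv (gf x) (y - x) + L / (1 + nu) * powR (enorm (y - x)) (1 + nu).
Proof.
move=> nu_gt0 gf_holder x y x_rho y_rho; set d := y - x.
have xdE : x + 1 *: d = y by rewrite scale1r /d addrC subrK.
have := taylor1_holder_le _ _ (L * powR (enorm d) (1 + nu)) nu nu_gt0 (is_derive_line x d).
rewrite scale0r addr0 xdE mulrAC; apply => t /andP[t_gt0 t_lt1].
have seg_rho : enorm (x + t *: d) <= rho.
  have -> : x + t *: d = (1 - t) *: x + t *: y by apply/rowP => i; rewrite !mxE; ring.
  apply: le_trans (ler_enormD _ _) _.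
  rewrite !enormZ !ger0_norm ?subr_ge0 ?(ltW t_lt1) ?(ltW t_gt0) //; nra.
rewrite -dotvBl; apply: le_trans (dotv_le_enorm _ _) _.
apply: le_trans (ler_wpM2r (enorm_ge0 d) (gf_holder _ _ seg_rho x_rho)) _.
rewrite addrC addKr enormZ ger0_norm ?(ltW t_gt0) // powRM ?(ltW t_gt0) ?enorm_ge0 //.
have nu1_gt0 : 0 < 1 + nu by rewrite ltr_pwDr.
rewrite powRD ?(gt_eqF nu1_gt0) // powRr1 ?enorm_ge0 //.
by rewrite [leRHS](_ : _ = L * (powR t nu * powR (enorm d) nu) * enorm d) //; ring.
Qed.

End Gradient.

Lemma powR_mulE {R : realType} (e p q s : R) : 0 < s -> p + q = s ->
  powR e p * powR e q = powR e s.
Proof. by move=> s_gt0 pq_s; rewrite -pq_s powRD // pq_s (gt_eqF s_gt0). Qed.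

Lemma powRVl {R : realType} (x q : R) : 0 <= x -> powR (x^-1) q = (powR x q)^-1.
Proof. by move=> x_ge0; rewrite -powR_inv1 // powRAC powR_inv1 ?powR_ge0. Qed.

Section HolderCoefficients.
Context {R : realType} {nu L : R}.
Hypotheses (nu_gt0 : 0 < nu) (L_gt0 : 0 < L).

Let nu1_gt0 : 0 < 1 + nu. Proof. by rewrite ltr_pwDr. Qed.

Lemma holder_argmax_le : 1 / powR L (1 / nu) <= powR ((1 + nu) / L) (1 / nu).
Proof.
rewrite powRM ?invr_ge0 ?(ltW nu1_gt0) ?(ltW L_gt0) // powRVl ?(ltW L_gt0) // div1r.
rewrite -[leLHS]mul1r ler_wpM2r ?invr_ge0 ?powR_ge0 // -[leLHS](powRr0 (1 + nu)).
by apply: ler_powR; rewrite ?lerDl ?ltW // divr_gt0.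
Qed.

Lemma holder_coef_at_argmax :
  1 / powR L (1 / nu) - L / (1 + nu) * powR (1 / powR L (1 / nu)) (1 + nu)
  = nu / (1 + nu) * (1 / powR L (1 / nu)).
Proof.
have Lq_gt0 : 0 < powR L (1 / nu) by rewrite powR_gt0.
rewrite div1r -powRN -powRrM (_ : - (1 / nu) * (1 + nu) = - (1 / nu) + -1); last first.
  by field; rewrite gt_eqF.
rewrite powRD ?(gt_eqF L_gt0) ?implybT // powR_inv1 ?(ltW L_gt0) // powRN.
by field; rewrite !gt_eqF.
Qed.

Lemma holder_coef_le_max a : 0 <= a ->
  a - L / (1 + nu) * powR a (1 + nu)
  <= 1 / powR L (1 / nu) - L / (1 + nu) * powR (1 / powR L (1 / nu)) (1 + nu).
Proof.
move=> a_ge0; rewrite holder_coef_at_argmax.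
have conj_exps : (1 + nu)^-1 + ((1 + nu) / nu)^-1 = 1 by field; rewrite !gt_eqF.
have L_inv_ge0 : 0 <= L^-1 by rewrite invr_ge0 ltW.
have := conjugate_powR a_ge0 L_inv_ge0 nu1_gt0 (divr_gt0 nu1_gt0 nu_gt0) conj_exps.
rewrite powRVl ?(ltW L_gt0) //.
rewrite -(powR_mulE L (1 / nu) 1 _ (divr_gt0 nu1_gt0 nu_gt0)); last first.
  by field; rewrite gt_eqF.
rewrite powRr1 ?(ltW L_gt0) // => /(ler_wpM2l (ltW L_gt0)).
have Lq_gt0 : 0 < powR L (1 / nu) by rewrite powR_gt0.
rewrite (_ : L * (a * L^-1) = a); last by field; rewrite gt_eqF.
rewrite (_ : L * (_ / (1 + nu) + _)
             = L / (1 + nu) * powR a (1 + nu) + nu / (1 + nu) * (1 / powR L (1 / nu))).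
  lra.
by field; rewrite !gt_eqF.
Qed.

Lemma holder_coef_ge0 a : 0 <= a -> a <= powR ((1 + nu) / L) (1 / nu) ->
  0 <= a - L / (1 + nu) * powR a (1 + nu).
Proof.
move=> a_ge0 a_le.
have amax_nu : powR a nu <= (1 + nu) / L.
  have a_nneg : a \is Num.nneg by rewrite nnegrE.
  have amax_nneg : powR ((1 + nu) / L) (1 / nu) \is Num.nneg by rewrite nnegrE powR_ge0.
  have := ge0_ler_powR (ltW nu_gt0) a_nneg amax_nneg a_le.
  rewrite /= -powRrM (_ : 1 / nu * nu = 1); last by field; rewrite gt_eqF.
  by rewrite powRr1 // divr_ge0 // ltW.
have : L / (1 + nu) * powR a nu <= 1.
  by rewrite mulrC -ler_pdivlMr ?divr_gt0 // div1r invf_div.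
rewrite -(powR_mulE a 1 nu _ nu1_gt0) // powRr1 //; nra.
Qed.

End HolderCoefficients.

Lemma dist_coef_ge0 {R : realType} (nu D a : R) : 0 <= a -> a <= 4 * nu / D ->
  0 <= 4 * nu * a / D - a ^+ 2.
Proof. by move=> a_ge0 a_le; rewrite mulrAC expr2 -mulrBl mulr_ge0 // subr_ge0. Qed.

Lemma dist_coef_le_max {R : realType} (nu D a : R) :
  4 * nu * a / D - a ^+ 2 <= 4 * nu * (2 * nu / D) / D - (2 * nu / D) ^+ 2.
Proof.
rewrite -subr_ge0 (_ : _ - _ = (a - 2 * nu / D) ^+ 2) ?sqr_ge0 //; ring.
Qed.

Definition holder_step {R : realType} {n : nat} (nu a : R) (g : 'rV[R]_n) : 'rV[R]_n :=
  (a * powR (enorm g) ((1 - nu) / nu)) *: g.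

Section HolderStep.
Context {R : realType} {n : nat} {nu : R}.
Hypothesis nu_gt0 : 0 < nu.
Implicit Types (a : R) (g w : 'rV[R]_n).

Lemma enorm_holder_step a g : 0 <= a ->
  enorm (holder_step nu a g) = a * powR (enorm g) (1 / nu).
Proof.
move=> a_ge0; rewrite enormZ ger0_norm ?mulr_ge0 ?powR_ge0 // -mulrA.
rewrite -{2}(powRr1 (enorm_ge0 g)) (powR_mulE _ _ _ _ (divr_gt0 ltr01 nu_gt0)) //.
by field; rewrite gt_eqF.
Qed.

Lemma powR_enorm_holder_step a g : 0 <= a ->
  powR (enorm (holder_step nu a g)) (1 + nu)
  = powR a (1 + nu) * powR (enorm g) ((1 + nu) / nu).
Proof.
move=> a_ge0; rewrite enorm_holder_step // powRM ?powR_ge0 // -powRrM.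
by congr (_ * powR _ _); field; rewrite gt_eqF.
Qed.

Lemma enorm_holder_step_sqr a g : 0 <= a ->
  enorm (holder_step nu a g) ^+ 2 = a ^+ 2 * powR (enorm g) (2 / nu).
Proof.
move=> a_ge0; rewrite enorm_holder_step // exprMn; congr (_ * _).
rewrite expr2 (powR_mulE _ _ _ _ (divr_gt0 (ltr0Sn R 1) nu_gt0)) //.
by field; rewrite gt_eqF.
Qed.

Lemma dotv_holder_step a g :
  dotv g (holder_step nu a g) = a * powR (enorm g) ((1 + nu) / nu).
Proof.
have nu1_gt0 : 0 < 1 + nu by rewrite ltr_pwDr.
rewrite dotvZr -enorm_sqr -(powR_mulrn 2 (enorm_ge0 g)) -mulrA.
rewrite (powR_mulE _ _ _ _ (divr_gt0 nu1_gt0 nu_gt0)) //.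
by field; rewrite gt_eqF.
Qed.

Lemma dotv_holder_step_ge {a g w} {c : R} : 0 <= a ->
  c * powR (enorm g) ((1 + nu) / nu) <= dotv g w ->
  c * (a * powR (enorm g) (2 / nu)) <= dotv (holder_step nu a g) w.
Proof.
move=> a_ge0 cE_le; rewrite dotvZl.
have two_nu_gt0 : 0 < 2 / nu by rewrite divr_gt0.
rewrite -(powR_mulE _ ((1 - nu) / nu) ((1 + nu) / nu) _ two_nu_gt0); last first.
  by field; rewrite gt_eqF.
set P := powR _ ((1 - nu) / nu); set E := powR _ ((1 + nu) / nu) in cE_le *.
have -> : c * (a * (P * E)) = a * P * (c * E) by ring.
by rewrite ler_wpM2l // mulr_ge0 ?powR_ge0.
Qed.

End HolderStep.

Section HolderIteration.
Context {R : realType} {n : nat} {f : 'rV[R]_n -> R} {gf : 'rV[R]_n -> 'rV[R]_n}.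
Context {nu L r : R}.
Hypotheses (f_grad : is_gradient f gf) (nu_gt0 : 0 < nu) (L_gt0 : 0 < L).
Hypothesis gf_holder : forall y z : 'rV[R]_n,
  enorm y <= (1 + 2 * powR (1 + nu) (1 / nu)) * r ->
  enorm z <= (1 + 2 * powR (1 + nu) (1 / nu)) * r ->
  enorm (gf y - gf z) <= L * powR (enorm (y - z)) nu.
Context {xs : 'rV[R]_n}.
Hypotheses (xs_min : forall y, f xs <= f y) (xs_r : enorm xs <= r).

Let nu1_gt0 : 0 < 1 + nu. Proof. by rewrite ltr_pwDr. Qed.
Let r_ge0 : 0 <= r. Proof. exact: le_trans (enorm_ge0 xs) xs_r. Qed.
Let r_le_rbar : r <= (1 + 2 * powR (1 + nu) (1 / nu)) * r.
Proof. have := mulr_ge0 (powR_ge0 (1 + nu) (1 / nu)) r_ge0; lra. Qed.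

Lemma enorm_gradient_le {y} : enorm y <= r -> enorm (gf y) <= L * powR (2 * r) nu.
Proof.
move=> y_r; have := gf_holder _ _ (le_trans y_r r_le_rbar) (le_trans xs_r r_le_rbar).
rewrite (gradient_eq0_at_min f_grad xs xs_min) subr0 => /le_trans; apply.
rewrite ler_wpM2l ?(ltW L_gt0) // ge0_ler_powR ?nnegrE ?enorm_ge0 ?mulr_ge0 //.
  exact: ltW.
apply: le_trans (ler_enormB _ _) _; apply: le_trans (lerD y_r xs_r) _; lra.
Qed.

Lemma enorm_holder_step_le {y a} : enorm y <= r -> 0 <= a ->
  a <= powR ((1 + nu) / L) (1 / nu) ->
  enorm (holder_step nu a (gf y)) <= 2 * powR (1 + nu) (1 / nu) * r.
Proof.
move=> y_r a_ge0 a_le; rewrite (enorm_holder_step nu_gt0) //.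
have grad_le : powR (enorm (gf y)) (1 / nu) <= powR (L * powR (2 * r) nu) (1 / nu).
  rewrite ge0_ler_powR ?nnegrE ?enorm_ge0 ?mulr_ge0 ?powR_ge0 ?(ltW L_gt0) //.
    by rewrite invr_ge0 ltW.
  exact: enorm_gradient_le y_r.
apply: le_trans (ler_pM a_ge0 (powR_ge0 _ _) a_le grad_le) _.
rewrite -powRM ?divr_ge0 ?mulr_ge0 ?powR_ge0 ?(ltW L_gt0) ?(ltW nu1_gt0) //.
rewrite mulrA (_ : (1 + nu) / L * L = 1 + nu); last by field; rewrite gt_eqF.
rewrite powRM ?powR_ge0 ?(ltW nu1_gt0) // -powRrM (_ : nu * (1 / nu) = 1).
  by rewrite powRr1 ?mulr_ge0 // mulrCA mulrA.
by field; rewrite gt_eqF.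
Qed.

Lemma holder_step_descent {y a} : enorm y <= r -> 0 <= a ->
  a <= powR ((1 + nu) / L) (1 / nu) ->
  f (y - holder_step nu a (gf y)) <=
  f y - (a - L / (1 + nu) * powR a (1 + nu)) * powR (enorm (gf y)) ((1 + nu) / nu).
Proof.
move=> y_r a_ge0 a_le.
have v_le := enorm_holder_step_le y_r a_ge0 a_le.
have yv_rbar :
    enorm (y - holder_step nu a (gf y)) <= (1 + 2 * powR (1 + nu) (1 / nu)) * r.
  by apply: le_trans (ler_enormB _ _) _; lra.
have := holder_descent f_grad nu_gt0 gf_holder _ _ (le_trans y_r r_le_rbar) yv_rbar.
rewrite [y - _ - y]addrAC subrr add0r dotvNr (dotv_holder_step nu_gt0) enormN.
rewrite (powR_enorm_holder_step nu_gt0) //.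
lra.
Qed.

Lemma holder_step_decr {y a} : enorm y <= r -> 0 <= a ->
  a <= powR ((1 + nu) / L) (1 / nu) -> f (y - holder_step nu a (gf y)) <= f y.
Proof.
move=> y_r a_ge0 a_le; apply: le_trans (holder_step_descent y_r a_ge0 a_le) _.
by rewrite gerBl mulr_ge0 ?powR_ge0 ?holder_coef_ge0.
Qed.

Hypothesis f_cvx : convex_fun f.

Lemma holder_gradient_coercive {y} : enorm y <= r ->
  2 * nu / ((1 + nu) * powR L (1 / nu)) * powR (enorm (gf y)) ((1 + nu) / nu)
  <= dotv (gf y) (y - xs).
Proof.
move=> y_r; set E := powR (enorm (gf y)) ((1 + nu) / nu).
have coef_max := holder_coef_at_argmax nu_gt0 L_gt0.
set t0 := 1 / powR L (1 / nu) in coef_max *.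
have t0_gt0 : 0 < t0 by rewrite divr_gt0 ?powR_gt0.
have t0_le := holder_argmax_le nu_gt0 L_gt0; rewrite -/t0 in t0_le.
have f_xs_le : f xs <= f y - nu / (1 + nu) * t0 * E.
  apply: le_trans (xs_min (y - holder_step nu t0 (gf y))) _.
  by apply: le_trans (holder_step_descent y_r (ltW t0_gt0) t0_le) _; rewrite coef_max.
have xsv_rbar :
    enorm (xs + holder_step nu t0 (gf y)) <= (1 + 2 * powR (1 + nu) (1 / nu)) * r.
  have := enorm_holder_step_le y_r (ltW t0_gt0) t0_le => v_le.
  by apply: le_trans (ler_enormD _ _) (le_trans (lerD xs_r v_le) _); lra.
have := holder_descent f_grad nu_gt0 gf_holder _ _ (le_trans xs_r r_le_rbar) xsv_rbar.
rewrite (gradient_eq0_at_min f_grad xs xs_min) dotvC dotv0r addr0 [xs + _ - xs]addrAC.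
rewrite subrr add0r (powR_enorm_holder_step nu_gt0) ?(ltW t0_gt0) // -/E mulrA.
move=> f_xsv_le.
have := convex_gradient_ineq f_grad f_cvx y (xs + holder_step nu t0 (gf y)).
rewrite [xs + _ - y]addrAC [dotv _ (xs - y + _)]dotvDr (dotv_holder_step nu_gt0) -/E.
rewrite -[xs - y]opprB dotvNr.
rewrite (_ : 2 * nu / ((1 + nu) * powR L (1 / nu)) = 2 * (nu / (1 + nu) * t0)).
  by have := congr1 ( *%R^~ E) coef_max; lra.
by rewrite /t0; field; rewrite !gt_eqF ?powR_gt0.
Qed.

Lemma holder_step_dist_sqr {y a} : enorm y <= r -> 0 <= a ->
  enorm (y - holder_step nu a (gf y) - xs) ^+ 2 <=
  enorm (y - xs) ^+ 2 - (4 * nu * a / ((1 + nu) * powR L (1 / nu)) - a ^+ 2)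
    * powR (enorm (gf y)) (2 / nu).
Proof.
move=> y_r a_ge0; rewrite [y - _ - xs]addrAC.
rewrite [enorm (_ - holder_step _ _ _) ^+ 2]enormB_sqr (enorm_holder_step_sqr nu_gt0) //.
have := dotv_holder_step_ge nu_gt0 a_ge0 (holder_gradient_coercive y_r).
lra.
Qed.

Lemma holder_step_dist_decr {y a} : enorm y <= r -> 0 <= a ->
  a <= 4 * nu / ((1 + nu) * powR L (1 / nu)) ->
  enorm (y - holder_step nu a (gf y) - xs) <= enorm (y - xs).
Proof.
move=> y_r a_ge0 a_le; rewrite -ler_sqr ?nnegrE ?enorm_ge0 //.
apply: le_trans (holder_step_dist_sqr y_r a_ge0) _.
by rewrite gerBl mulr_ge0 ?powR_ge0 ?dist_coef_ge0.
Qed.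

End HolderIteration.

Theorem theorem3p13 (R : realType) (n : nat) (nu : R)
  (f : 'rV[R]_n -> R) (gf : 'rV[R]_n -> 'rV[R]_n)
  (x0 : 'rV[R]_n) (r L : R) (x : nat -> 'rV[R]_n) (alpha : nat -> R) :
  0 < nu -> nu <= 1 ->
  convex_fun f ->
  is_gradient f gf ->
  continuous gf ->
  locally_holder gf nu ->
  (exists xs : 'rV[R]_n, forall y, f xs <= f y) ->
  (* the level set Lambda(x0) is bounded *)
  (exists M : R, forall y, f y <= f x0 -> enorm y <= M) ->
  (* r = max { ||y|| : y in Lambda(x0) } *)
  (exists y, f y <= f x0 /\ enorm y = r) ->
  (forall y, f y <= f x0 -> enorm y <= r) ->
  (* L = L_Omega, Hölder constant on Omega = closed ball(0, rbar) *)
  0 < L ->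
  (forall y z : 'rV[R]_n,
     enorm y <= (1 + 2 * powR (1 + nu) (1 / nu)) * r ->
     enorm z <= (1 + 2 * powR (1 + nu) (1 / nu)) * r ->
     enorm (gf y - gf z) <= L * powR (enorm (y - z)) nu) ->
  x 0%N = x0 ->
  (forall k, x k.+1 = x k - (alpha k * powR (enorm (gf (x k))) ((1 - nu) / nu)) *: gf (x k)) ->
  (forall k, 0 < alpha k /\ alpha k <= powR ((1 + nu) / L) (1 / nu)) ->
  (* (a) *)
  ((forall k, f (x k) <= f x0)
   /\ (forall k, f (x k.+1) <= f (x k)
         - (alpha k - L / (1 + nu) * powR (alpha k) (1 + nu))
           * powR (enorm (gf (x k))) ((1 + nu) / nu))
   /\ (forall k, f (x k.+1) <= f (x k)))
  (* (b) *)
  /\ ((forall k, alpha k <= 4 * nu / ((1 + nu) * powR L (1 / nu))) ->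
      forall xs : 'rV[R]_n, (forall y, f xs <= f y) ->
        (forall k, enorm (x k.+1 - xs) ^+ 2 <= enorm (x k - xs) ^+ 2
            - (4 * nu * alpha k / ((1 + nu) * powR L (1 / nu)) - alpha k ^+ 2)
              * powR (enorm (gf (x k))) (2 / nu))
        /\ (forall k, enorm (x k.+1 - xs) <= enorm (x k - xs)))
  (* (c) *)
  /\ ((0 < 1 / powR L (1 / nu) /\ 1 / powR L (1 / nu) <= powR ((1 + nu) / L) (1 / nu)
       /\ forall a : R, 0 < a -> a <= powR ((1 + nu) / L) (1 / nu) ->
          a - L / (1 + nu) * powR a (1 + nu)
          <= 1 / powR L (1 / nu) - L / (1 + nu) * powR (1 / powR L (1 / nu)) (1 + nu))
      /\ (0 < 2 * nu / ((1 + nu) * powR L (1 / nu))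
          /\ 2 * nu / ((1 + nu) * powR L (1 / nu)) <= 4 * nu / ((1 + nu) * powR L (1 / nu))
          /\ forall a : R, 0 < a -> a <= 4 * nu / ((1 + nu) * powR L (1 / nu)) ->
             4 * nu * a / ((1 + nu) * powR L (1 / nu)) - a ^+ 2
             <= 4 * nu * (2 * nu / ((1 + nu) * powR L (1 / nu))) / ((1 + nu) * powR L (1 / nu))
                - (2 * nu / ((1 + nu) * powR L (1 / nu))) ^+ 2)).
Proof.
move=> nu_gt0 _ f_cvx f_grad _ _ [xs0 xs0_min] _ _ level_r L_gt0 gf_holder x_0 x_step alpha_bd.
have x_succ k : x k.+1 = x k - holder_step nu (alpha k) (gf (x k)) := x_step k.
have alpha_ge0 k : 0 <= alpha k := ltW (alpha_bd k).1.
have alpha_le k := (alpha_bd k).2.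
have xs0_r := level_r _ (xs0_min x0).
have descent := holder_step_descent f_grad nu_gt0 L_gt0 gf_holder xs0_min xs0_r.
have decr := holder_step_decr f_grad nu_gt0 L_gt0 gf_holder xs0_min xs0_r.
have level k : f (x k) <= f x0.
  elim: k => [|k IH]; first by rewrite x_0.
  by rewrite x_succ; apply: le_trans (decr _ _ (level_r _ IH) (alpha_ge0 k) (alpha_le k)) IH.
have x_r k := level_r _ (level k).
split; [split; [exact: level | split => k] | split].
- by rewrite x_succ; exact: descent (x_r k) (alpha_ge0 k) (alpha_le k).
- by rewrite x_succ; exact: decr (x_r k) (alpha_ge0 k) (alpha_le k).
- move=> alpha_le' xs xs_min; have xs_r := level_r _ (xs_min x0).
  split => k; rewrite x_succ.
  + exact (holder_step_dist_sqr f_grad nu_gt0 L_gt0 gf_holder xs_min xs_r f_cvx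
      (x_r k) (alpha_ge0 k)).
  + exact (holder_step_dist_decr f_grad nu_gt0 L_gt0 gf_holder xs_min xs_r f_cvx
      (x_r k) (alpha_ge0 k) (alpha_le' k)).
- have D_gt0 : 0 < (1 + nu) * powR L (1 / nu) by rewrite mulr_gt0 ?addr_gt0 ?powR_gt0.
  split; split.
  + by rewrite divr_gt0 ?powR_gt0.
  + split; first exact: holder_argmax_le.
    by move=> a a_gt0 _; apply: holder_coef_le_max; rewrite ?ltW.
  + by rewrite divr_gt0 // mulr_gt0.
  + split; last by move=> a _ _; exact: dist_coef_le_max.
    by rewrite ler_pM2r ?invr_gt0 // ler_pM2r // ler_nat.
Qed.
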